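(* Let $W$ be a graphon satisfying the Regularity Condition. There exists $\varepsilon'>0$ such that $\det M(y)>\varepsilon'$ for all $y\in[0,1]^2$.
   Context: A graphon is a symmetric measurable $W:[0,1]^2\to[0,1]$; $D(x)=\int_0^1W(x,y)dy$. Regularity Condition: $W\in\mathcal{C}^3([0,1]^2)$, $D'>0$, $W\le1-\varepsilon_0$ and $D\ge\varepsilon_0$ for some $\varepsilon_0\in(0,1/2)$. For $y=(y_1,y_2)\in[0,1]^2$, $M(y)$ is the $2\times2$ symmetric matrix with diagonal entries $D(y_1)(1-D(y_1))$, $D(y_2)(1-D(y_2))$ and off-diagonal entries $\int_0^1W(y_1,z)W(y_2,z)dz-D(y_1)D(y_2)$. *)

From Stdlib Require Import Reals.
From Coquelicot Require Import Coquelicot.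
Open Scope R_scope.

(* Graphons are represented as functions W : R -> R -> R; only their values on
   [0,1]^2 matter for the graphon properties below. *)

Definition in01 (x : R) : Prop := 0 <= x <= 1.

Definition px (f : R -> R -> R) : R -> R -> R :=
  fun x y => Derive (fun t => f t y) x.
Definition py (f : R -> R -> R) : R -> R -> R :=
  fun x y => Derive (fun t => f x t) y.

Fixpoint Ck (k : nat) (Om : R * R -> Prop) (f : R -> R -> R) : Prop :=
  match k with
  | 0%nat => forall p, Om p -> continuous (fun q : R * R => f (fst q) (snd q)) p
  | S k' =>
      (forall p, Om p -> continuous (fun q : R * R => f (fst q) (snd q)) p) /\
      (forall p, Om p -> ex_derive (fun t => f t (snd p)) (fst p)
                       /\ ex_derive (fun t => f (fst p) t) (snd p)) /\
      Ck k' Om (px f) /\ Ck k' Om (py f)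
  end.

(* W in C^3([0,1]^2): W is C^3 on an open set containing the closed square. *)
Definition C3_square (W : R -> R -> R) : Prop :=
  exists U : R * R -> Prop,
    open U /\ (forall x y, in01 x -> in01 y -> U (x, y)) /\ Ck 3 U W.

(* Graphon: symmetric, [0,1]-valued on [0,1]^2 (measurability is implied by
   the continuity in the Regularity Condition). *)
Definition graphon (W : R -> R -> R) : Prop :=
  (forall x y, in01 x -> in01 y -> W x y = W y x) /\
  (forall x y, in01 x -> in01 y -> 0 <= W x y <= 1).

Definition Deg (W : R -> R -> R) (x : R) : R := RInt (fun y => W x y) 0 1.

Definition regularity (W : R -> R -> R) : Prop :=
  C3_square W /\
  (forall x, in01 x -> ex_derive (Deg W) x /\ 0 < Derive (Deg W) x) /\
  exists eps0 : R, 0 < eps0 < 1/2 /\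
    (forall x y, in01 x -> in01 y -> W x y <= 1 - eps0) /\
    (forall x, in01 x -> eps0 <= Deg W x).

Definition M11 (W : R -> R -> R) (y1 y2 : R) : R := Deg W y1 * (1 - Deg W y1).
Definition M22 (W : R -> R -> R) (y1 y2 : R) : R := Deg W y2 * (1 - Deg W y2).
Definition M12 (W : R -> R -> R) (y1 y2 : R) : R :=
  RInt (fun z => W y1 z * W y2 z) 0 1 - Deg W y1 * Deg W y2.

Definition detM (W : R -> R -> R) (y1 y2 : R) : R :=
  M11 W y1 y2 * M22 W y1 y2 - M12 W y1 y2 * M12 W y1 y2.

(* For uniform Z on [0,1], M(y) is the sum of the diagonal matrix with entries
   E[W(y_i,Z)(1 - W(y_i,Z))] and the covariance matrix of (W(y1,Z), W(y2,Z)).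
   Adding a positive semidefinite matrix to a nonnegative diagonal one does not
   decrease the determinant, and each diagonal entry is at least
   eps0 * D(y_i) >= eps0^2, so det M(y) >= eps0^4. *)

From Stdlib Require Import Reals Lra Psatz.
From Coquelicot Require Import Coquelicot.
Open Scope R_scope.

Lemma quadratic_form_nonneg_discr (a b c : R) :
  (forall s t, 0 <= s * s * a + 2 * s * t * b + t * t * c) -> b * b <= a * c.
Proof.
  intros Hq.
  pose proof (Hq 1 0) as Ha. pose proof (Hq 0 1) as Hc.
  destruct (Rle_lt_or_eq_dec 0 a ltac:(lra)) as [Ha_pos | <-].
  - pose proof (Hq b (- a)). nra.
  - destruct (Rle_lt_or_eq_dec 0 c ltac:(lra)) as [Hc_pos | <-].
    + pose proof (Hq c (- b)). nra.
    + pose proof (Hq (- b) 1). nra.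
Qed.

Lemma det2_diag_add_psd (a b c11 c12 c22 : R) :
  0 <= a -> 0 <= b -> 0 <= c11 -> 0 <= c22 -> c12 * c12 <= c11 * c22 ->
  a * b <= (a + c11) * (b + c22) - c12 * c12.
Proof. intros; nra. Qed.

Definition continuous_on01 (h : R -> R) : Prop :=
  forall z, in01 z -> continuous h z.

Lemma continuous_on01_const (c : R) : continuous_on01 (fun _ => c).
Proof. intros z _; apply continuous_const. Qed.

Lemma continuous_on01_plus (f g : R -> R) :
  continuous_on01 f -> continuous_on01 g -> continuous_on01 (fun z => f z + g z).
Proof. intros Hf Hg z Hz; exact (continuous_plus f g z (Hf z Hz) (Hg z Hz)). Qed.

Lemma continuous_on01_minus (f g : R -> R) :
  continuous_on01 f -> continuous_on01 g -> continuous_on01 (fun z => f z - g z).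
Proof. intros Hf Hg z Hz; exact (continuous_minus f g z (Hf z Hz) (Hg z Hz)). Qed.

Lemma continuous_on01_mult (f g : R -> R) :
  continuous_on01 f -> continuous_on01 g -> continuous_on01 (fun z => f z * g z).
Proof. intros Hf Hg z Hz; exact (continuous_mult f g z (Hf z Hz) (Hg z Hz)). Qed.

Lemma continuous_on01_lincomb (a b : R) (f g : R -> R) :
  continuous_on01 f -> continuous_on01 g ->
  continuous_on01 (fun z => a * f z + b * g z).
Proof.
  intros Hf Hg.
  apply continuous_on01_plus; apply continuous_on01_mult;
    auto using continuous_on01_const.
Qed.

Lemma ex_RInt_continuous_on01 (h : R -> R) : continuous_on01 h -> ex_RInt h 0 1.
Proof.
  intros Hh; apply (@ex_RInt_continuous R_CompleteNormedModule); intros z Hz.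
  rewrite Rmin_left, Rmax_right in Hz by lra.
  exact (Hh z Hz).
Qed.

Definition mean (h : R -> R) : R := RInt h 0 1.

Definition cov (f g : R -> R) : R := mean (fun z => f z * g z) - mean f * mean g.

Lemma mean_const (c : R) : mean (fun _ => c) = c.
Proof. unfold mean; rewrite RInt_const; simpl; unfold scal; simpl; unfold mult; simpl; ring. Qed.

Lemma mean_lincomb (a b : R) (f g : R -> R) :
  continuous_on01 f -> continuous_on01 g ->
  mean (fun z => a * f z + b * g z) = a * mean f + b * mean g.
Proof.
  intros Hf Hg; unfold mean.
  pose proof (ex_RInt_continuous_on01 f Hf) as If.
  pose proof (ex_RInt_continuous_on01 g Hg) as Ig.
  rewrite (@RInt_plus R_CompleteNormedModule (fun z => a * f z) (fun z => b * g z)).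
  - rewrite (@RInt_scal R_CompleteNormedModule f), (@RInt_scal R_CompleteNormedModule g);
      auto.
  - apply (@ex_RInt_scal R_CompleteNormedModule f); auto.
  - apply (@ex_RInt_scal R_CompleteNormedModule g); auto.
Qed.

Lemma mean_le (f g : R -> R) :
  continuous_on01 f -> continuous_on01 g ->
  (forall z, in01 z -> f z <= g z) -> mean f <= mean g.
Proof.
  intros Hf Hg Hfg; apply RInt_le; [lra | now apply ex_RInt_continuous_on01 ..|].
  intros z Hz; apply Hfg; red; lra.
Qed.

Lemma mean_ext (f g : R -> R) : (forall z, f z = g z) -> mean f = mean g.
Proof. intros Hfg; apply RInt_ext; intros z _; apply Hfg. Qed.

Lemma mean_scal (a : R) (f : R -> R) :
  continuous_on01 f -> mean (fun z => a * f z) = a * mean f.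
Proof.
  intros Hf.
  rewrite (mean_ext _ (fun z => a * f z + 0 * f z)) by (intros; ring).
  rewrite mean_lincomb by exact Hf; ring.
Qed.

Lemma cov_self_ge0 (h : R -> R) : continuous_on01 h -> 0 <= cov h h.
Proof.
  intros Hh; set (m := mean h).
  assert (Hsq : 0 <= mean (fun z => (h z - m) * (h z - m))).
  { rewrite <- (mean_const 0).
    apply mean_le; [apply continuous_on01_const | |intros; apply Rle_0_sqr].
    apply continuous_on01_mult; apply continuous_on01_minus;
      auto using continuous_on01_const. }
  rewrite (mean_ext _ (fun z => 1 * (h z * h z) + 1 * ((- 2 * m) * h z + (m * m) * 1)))
    in Hsq by (intros; ring).
  rewrite !mean_lincomb, mean_const in Hsq;
    auto using continuous_on01_mult, continuous_on01_lincomb, continuous_on01_const.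
  unfold cov; fold m in Hsq |- *; lra.
Qed.

Lemma cov_lincomb_self (s t : R) (f g : R -> R) :
  continuous_on01 f -> continuous_on01 g ->
  cov (fun z => s * f z + t * g z) (fun z => s * f z + t * g z)
  = s * s * cov f f + 2 * s * t * cov f g + t * t * cov g g.
Proof.
  intros Hf Hg; unfold cov.
  rewrite (mean_ext (fun z => (s * f z + t * g z) * (s * f z + t * g z))
             (fun z => (s * s) * (f z * f z)
                       + 1 * ((2 * s * t) * (f z * g z) + (t * t) * (g z * g z))))
    by (intros; ring).
  rewrite !mean_lincomb;
    auto using continuous_on01_mult, continuous_on01_lincomb.
  ring.
Qed.

Lemma cov_cauchy_schwarz (f g : R -> R) :
  continuous_on01 f -> continuous_on01 g -> cov f g * cov f g <= cov f f * cov g g.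
Proof.
  intros Hf Hg; apply quadratic_form_nonneg_discr; intros s t.
  rewrite <- cov_lincomb_self by assumption.
  now apply cov_self_ge0, continuous_on01_lincomb.
Qed.

Lemma bernoulli_var_split (h : R -> R) :
  continuous_on01 h ->
  mean h * (1 - mean h) = mean (fun z => h z * (1 - h z)) + cov h h.
Proof.
  intros Hh; unfold cov.
  rewrite (mean_ext (fun z => h z * (1 - h z)) (fun z => 1 * h z + (- 1) * (h z * h z)))
    by (intros; ring).
  rewrite mean_lincomb by auto using continuous_on01_mult.
  ring.
Qed.

Lemma mean_one_minus_ge (e : R) (h : R -> R) :
  0 <= e -> continuous_on01 h -> (forall z, in01 z -> 0 <= h z <= 1 - e) -> e <= mean h ->
  e * e <= mean (fun z => h z * (1 - h z)).
Proof.
  intros He Hh Hbd Hm.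
  apply Rle_trans with (mean (fun z => e * h z)).
  - rewrite mean_scal by exact Hh.
    now apply Rmult_le_compat_l.
  - apply mean_le;
      [| |intros z Hz; destruct (Hbd z Hz); nra];
      auto using continuous_on01_mult, continuous_on01_minus, continuous_on01_const.
Qed.

Lemma bernoulli_cov_det_ge (e : R) (f g : R -> R) :
  0 <= e -> continuous_on01 f -> continuous_on01 g ->
  (forall z, in01 z -> 0 <= f z <= 1 - e) -> (forall z, in01 z -> 0 <= g z <= 1 - e) ->
  e <= mean f -> e <= mean g ->
  e * e * (e * e)
  <= mean f * (1 - mean f) * (mean g * (1 - mean g)) - cov f g * cov f g.
Proof.
  intros He Hf Hg Hfb Hgb Hmf Hmg.
  pose proof (mean_one_minus_ge e f He Hf Hfb Hmf) as Hdf.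
  pose proof (mean_one_minus_ge e g He Hg Hgb Hmg) as Hdg.
  rewrite (bernoulli_var_split f Hf), (bernoulli_var_split g Hg).
  apply Rle_trans with
    (mean (fun z => f z * (1 - f z)) * mean (fun z => g z * (1 - g z))).
  - apply Rmult_le_compat; nra.
  - apply det2_diag_add_psd; try nra;
      auto using cov_self_ge0, cov_cauchy_schwarz.
Qed.

Lemma C3_square_continuous_slice (W : R -> R -> R) (y : R) :
  C3_square W -> in01 y -> continuous_on01 (W y).
Proof.
  intros [U [_ [HinU [Hcont _]]]] Hy z Hz.
  apply (continuous_comp_2 (fun _ => y) (fun z => z) W z);
    [apply continuous_const | apply continuous_id | now apply Hcont, HinU].
Qed.

Lemma detM_mean_cov (W : R -> R -> R) (y1 y2 : R) :
  detM W y1 y2 = mean (W y1) * (1 - mean (W y1)) * (mean (W y2) * (1 - mean (W y2)))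
                 - cov (W y1) (W y2) * cov (W y1) (W y2).
Proof. reflexivity. Qed.

Theorem lemma11p1 (W : R -> R -> R) :
  graphon W -> regularity W ->
  exists eps' : R, 0 < eps' /\
    forall y1 y2 : R, in01 y1 -> in01 y2 -> eps' < detM W y1 y2.
Proof.
  intros [_ Hbd] [HC3 [_ [e [He [Hle HD]]]]].
  assert (Hslice : forall y, in01 y -> forall z, in01 z -> 0 <= W y z <= 1 - e).
  { intros y Hy z Hz; specialize (Hbd y z Hy Hz); specialize (Hle y z Hy Hz); lra. }
  assert (He4 : 0 < e * e * (e * e)) by (apply Rmult_lt_0_compat; nra).
  exists (e * e * (e * e) / 2); split; [lra|].
  intros y1 y2 Hy1 Hy2.
  pose proof (bernoulli_cov_det_ge e (W y1) (W y2) ltac:(lra)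
                (C3_square_continuous_slice W y1 HC3 Hy1)
                (C3_square_continuous_slice W y2 HC3 Hy2)
                (Hslice y1 Hy1) (Hslice y2 Hy2) (HD y1 Hy1) (HD y2 Hy2)).
  rewrite detM_mean_cov; lra.
Qed.
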